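(* Let $N,K,d$ be positive integers, let $\bm{r}\in\mathbb{R}^d$, let $i_w\in\{1,\dots,d\}$, let $\mathcal{H}$ be a finite nonempty scenario set, and for each $k\in\{1,\dots,K\}$ and $h\in\mathcal{H}$ let $\bm{M^{k,h}}\in\mathbb{R}^{d\times d}$. Let $\mathcal{Y}=\{\bm{y}\in\{0,1\}^{K\times d}:\sum_{k=1}^K y_{k,i}=1,\ i=1,\dots,d\}$. For $\bm{y}\in\mathcal{Y}$ and $h\in\mathcal{H}$ define vectors $\bm{u^h_n}\in\mathbb{R}^d$ by $\bm{u^h_0}=\bm{r}$ and $u^h_{n,j}=\sum_{k=1}^K\sum_{i=1}^d u^h_{n-1,i}M^{k,h}_{ij}y_{k,i}$ for $n=1,\dots,N$, $j=1,\dots,d$, and set $\ell_h(\bm{y})=u^h_{N,i_w}$. Let $\alpha\in(0,1]$ and let $\mathcal{H}^1,\dots,\mathcal{H}^P$ be a partition of $\mathcal{H}$ into $P$ subsets of equal cardinality with $\alpha|\mathcal{H}^p|\in\mathbb{Z}_+$ for all $p$. Let $\hat z_{\mathcal{H}}=\max_{\bm{y}\in\mathcal{Y}}s_\alpha\big([\ell_h(\bm{y})]_{h\in\mathcal{H}}\big)$ and for each $p$ let $\bm{y^{(p)}}\in\arg\max_{\bm{y}\in\mathcal{Y}}s_\alpha\big([\ell_h(\bm{y})]_{h\in\mathcal{H}^p}\big)$. Then $$\max_{p=1,\dots,P}s_\alpha\big([\ell_h(\bm{y^{(p)}})]_{h\in\mathcal{H}}\big)\ \le\ \hat z_{\mathcal{H}}\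 \le\ \frac1P\sum_{p=1}^P s_\alpha\big([\ell_h(\bm{y^{(p)}})]_{h\in\mathcal{H}^p}\big).$$
   Context: For a finite index set $\mathcal{G}$, a vector $\bm{\upsilon}\in\mathbb{R}^{|\mathcal{G}|}$ and $\alpha\in(0,1]$ with $\alpha|\mathcal{G}|\in\mathbb{Z}_+$, $s_\alpha(\bm{\upsilon})$ denotes the average of the $\alpha|\mathcal{G}|$ smallest entries of $\bm{\upsilon}$. In the paper $\hat z_{\mathcal{H}}$ is defined as the optimal value of a mixed-integer linear program that is an exact reformulation of the maximization problem written above; $i_w$ is the index of the target (''wild type'') state and $y_{k,i}=1$ means antibiotic $k$ is applied whenever the state is $i$. *)

From HB Require Import structures.
From mathcomp Require Import all_boot all_order all_algebra.
From mathcomp Require Import reals.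
Set Implicit Arguments. Unset Strict Implicit. Unset Printing Implicit Defensive.
Import Order.TTheory GRing.Theory Num.Theory.
Local Open Scope ring_scope.

(* Maximum of f over the (nonempty) finite set A; 0 if A is empty (never used
   in that case). *)
Definition fmax (R : realDomainType) (T : finType) (A : pred T) (f : T -> R) : R :=
  match [pick x in A] with
  | Some x0 => \big[Num.max/f x0]_(x in A) f x
  | None => 0
  end.

(* s_alpha(v restricted to G): the average of the alpha|G| smallest entries of
   [v h]_{h in G}.  alpha|G| is assumed to be an integer, so truncn is exact. *)
Definition s_alpha (R : realType) (H : finType) (alpha : R) (G : {set H})
    (v : H -> R) : R :=
  let m := Num.truncn (alpha * #|G|%:R) in
  (\sum_(x <- take m (sort <=%R [seq v h | h <- enum G])) x) / m%:R.

Definition inY (K d : nat) (y : 'M[bool]_(K, d)) : bool :=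
  [forall i : 'I_d, (\sum_(k < K) nat_of_bool (y k i)) == 1%N].

Fixpoint u (R : realType) (H : finType) (K d : nat) (r : 'rV[R]_d)
    (M : 'I_K -> H -> 'M[R]_d) (y : 'M[bool]_(K, d)) (h : H) (n : nat) : 'rV[R]_d :=
  match n with
  | 0 => r
  | n'.+1 =>
      let v := u r M y h n' in
      \row_j \sum_(k < K) \sum_(i < d) v 0 i * M k h i j * (y k i)%:R
  end.

Definition ell (R : realType) (H : finType) (N K d : nat) (r : 'rV[R]_d)
    (iw : 'I_d) (M : 'I_K -> H -> 'M[R]_d) (y : 'M[bool]_(K, d)) (h : H) : R :=
  u r M y h N 0 iw.

From HB Require Import structures.
From mathcomp Require Import all_boot all_order all_algebra.
From mathcomp Require Import reals.

(* The lower bound holds because every y^(p) is feasible for the problem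
   defining zhat.  For the upper bound fix a feasible y and let m = alpha|H^p|.
   The sum of the alpha|H| = P m smallest values of [ell_h(y)]_{h in H} is at
   most the sum of any P m of them, in particular of the m smallest ones of
   each block H^p; dividing by P m gives
   s_alpha over H <= (1/P) sum_p s_alpha over H^p,
   and each term on the right is at most its value at the block optimiser y^(p). *)

Set Implicit Arguments.
Unset Strict Implicit.
Unset Printing Implicit Defensive.
Import Order.TTheory GRing.Theory Num.Theory.
Local Open Scope ring_scope.

Section Fmax.
Variables (R : realDomainType) (T : finType) (A : pred T) (f : T -> R).

Lemma fmax_ub x : x \in A -> f x <= fmax A f.
Proof.
move=> Ax; rewrite /fmax; case: pickP => [x0 _|/(_ x)]; last by rewrite Ax.
exact: le_bigmax_cond.
Qed.

Lemma fmax_le x c : x \in A -> (forall y, y \in A -> f y <= c) -> fmax A f <= c.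
Proof.
move=> Ax fc; rewrite /fmax; case: pickP => [x0 Ax0|/(_ x)]; last by rewrite Ax.
by apply: bigmax_le => [|y]; apply: fc.
Qed.

End Fmax.

Section SumSmallest.
Variable R : realDomainType.
Implicit Types (x : R) (s t w : seq R) (m n : nat).

Definition sum_smallest m s := \sum_(x <- take m (sort <=%R s)) x.

Lemma perm_sum_smallest m s t : perm_eq s t -> sum_smallest m s = sum_smallest m t.
Proof. by rewrite /sum_smallest => /(perm_sortP le_total le_trans le_anti) ->. Qed.

Lemma merge1_cons x y s : merge <=%R [:: x] (y :: s) =
  if x <= y then [:: x, y & s] else y :: merge <=%R [:: x] s.
Proof. by []. Qed.

Lemma sort_cons x s : sort <=%R (x :: s) = merge <=%R [:: x] (sort <=%R s).
Proof.
apply: (sorted_eq le_trans le_anti); first exact: (sort_sorted le_total).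
  exact/(merge_sorted le_total)/(sort_sorted le_total).
by rewrite perm_sort perm_sym perm_merge /= perm_cons perm_sort.
Qed.

Lemma sum_take_merge1_le x s m : sorted <=%R s -> (m <= size s)%N ->
  \sum_(z <- take m (merge <=%R [:: x] s)) z <= \sum_(z <- take m s) z.
Proof.
elim: s m => [|y s IHs] [|m] s_sorted m_le; rewrite ?take0 ?big_nil // merge1_cons.
case: ifP => [x_le_y|_]; last first.
  by rewrite /= !big_cons lerD2l IHs // (path_sorted s_sorted).
have x_le_s z : z \in y :: s -> x <= z.
  rewrite inE => /predU1P[-> //|z_s]; apply: le_trans x_le_y _.
  by move/allP: (order_path_min le_trans s_sorted); apply.
rewrite -[take m.+1 [:: x, y & s]]/(x :: take m (y :: s)) -/(take m.+1 (y :: s)).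
rewrite (take_nth 0 m_le) -cats1 big_cons big_cat big_seq1 /= addrC lerD2r.
exact/x_le_s/mem_nth.
Qed.

Lemma sum_smallest_cons_le x s m :
  (m <= size s)%N -> sum_smallest m (x :: s) <= sum_smallest m s.
Proof.
move=> m_le; rewrite /sum_smallest sort_cons.
by apply: sum_take_merge1_le; rewrite ?size_sort //; exact: (sort_sorted le_total).
Qed.

Lemma sum_smallest_le_sum w w' s :
  perm_eq (w ++ w') s -> sum_smallest (size w) s <= \sum_(x <- w) x.
Proof.
move/perm_sum_smallest <-; elim: w' => [|y w' IHw'].
  rewrite cats0 /sum_smallest take_oversize ?size_sort //.
  by rewrite (perm_big w) ?perm_sort.
rewrite (@perm_sum_smallest _ _ (y :: w ++ w')); last by rewrite -cat1s perm_catCA.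
by apply: le_trans IHw'; rewrite sum_smallest_cons_le // size_cat leq_addr.
Qed.

Lemma sum_smallest_cat_le m n s t : (m <= size s)%N -> (n <= size t)%N ->
  sum_smallest (m + n) (s ++ t) <= sum_smallest m s + sum_smallest n t.
Proof.
move=> m_le n_le.
pose w := take m (sort <=%R s) ++ take n (sort <=%R t).
pose w' := drop m (sort <=%R s) ++ drop n (sort <=%R t).
have -> : (m + n)%N = size w by rewrite size_cat !size_takel ?size_sort.
have perm_w : perm_eq (w ++ w') (s ++ t).
  by rewrite perm_catACA !cat_take_drop perm_cat ?perm_sort.
by have := sum_smallest_le_sum perm_w; rewrite big_cat.
Qed.

Lemma sum_smallest_flatten_le (I : Type) (r : seq I) (F : I -> seq R) (k : I -> nat) :
  (forall i, k i <= size (F i))%N ->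
  sum_smallest (\sum_(i <- r) k i) (flatten (map F r)) <=
  \sum_(i <- r) sum_smallest (k i) (F i).
Proof.
move=> k_le; elim: r => [|i r IHr]; first by rewrite !big_nil /sum_smallest take0 big_nil.
have sum_k_le : (\sum_(j <- r) k j <= size (flatten (map F r)))%N.
  by rewrite size_flatten /shape -map_comp sumnE big_map leq_sum.
rewrite !big_cons /=; apply: le_trans (sum_smallest_cat_le (k_le i) sum_k_le) _.
by rewrite lerD2l.
Qed.

End SumSmallest.

Lemma s_alphaE (R : realType) (T : finType) (alpha : R) (G : {set T})
    (v : T -> R) m :
  alpha * #|G|%:R = m%:R -> s_alpha alpha G v = sum_smallest m [seq v x | x <- enum G] / m%:R.
Proof. by move=> alpha_G; rewrite /s_alpha alpha_G natrK. Qed.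

Section Partition.
Variables (T I : finType) (A : I -> {set T}).
Hypothesis A_disjoint : forall i j, i != j -> [disjoint A i & A j].

Lemma perm_enum_bigcup :
  perm_eq (enum (\bigcup_i A i)) (flatten [seq enum (A i) | i <- index_enum I]).
Proof.
have count_enum a (B : {set T}) : count a (enum B) = (\sum_(x in B) a x)%N.
  by rewrite -sum1_count big_enum_cond big_mkcondr.
apply/permP => a; rewrite count_flatten sumnE !big_map count_enum.
rewrite partition_disjoint_bigcup //; apply: eq_bigr => i _.
by rewrite count_enum.
Qed.

Lemma card_bigcup_disjoint : #|\bigcup_i A i| = (\sum_i #|A i|)%N.
Proof.
rewrite -sum1_card partition_disjoint_bigcup //.
by apply: eq_bigr => i _; rewrite sum1_card.
Qed.

Lemma s_alpha_bigcup_le (R : realType) (alpha : R) (m : nat) (v : T -> R) :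
    alpha <= 1 -> (forall i, alpha * #|A i|%:R = m%:R) ->
  s_alpha alpha (\bigcup_i A i) v <= #|I|%:R^-1 * \sum_i s_alpha alpha (A i) v.
Proof.
move=> alpha_le1 alpha_A.
have m_le i : (m <= size [seq v x | x <- enum (A i)])%N.
  by rewrite size_map -cardE -(ler_nat R) -(alpha_A i) ler_piMl.
have alpha_U : alpha * #|\bigcup_i A i|%:R = (\sum_(i : I) m)%:R.
  by rewrite card_bigcup_disjoint !natr_sum mulr_sumr; apply: eq_bigr.
rewrite (s_alphaE v alpha_U) (perm_sum_smallest _ (perm_map v perm_enum_bigcup)).
rewrite map_flatten -map_comp (eq_bigr _ (fun i _ => s_alphaE v (alpha_A i))).
have -> : (\sum_(i : I) m)%:R = #|I|%:R * m%:R :> R by rewrite sum_nat_const natrM.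
rewrite -mulr_suml invfM mulrCA ler_wpM2l ?invr_ge0 // ler_wpM2r ?invr_ge0 //.
exact: sum_smallest_flatten_le.
Qed.

End Partition.

Theorem proposition4 (R : realType) (N K d : nat) (r : 'rV[R]_d) (iw : 'I_d)
    (H : finType) (M : 'I_K -> H -> 'M[R]_d) (alpha : R)
    (P : nat) (Hp : 'I_P -> {set H}) (yp : 'I_P -> 'M[bool]_(K, d)) :
  (0 < N)%N -> (0 < K)%N -> (0 < d)%N -> (0 < #|H|)%N ->
  0 < alpha -> alpha <= 1 ->
  (* H^1..H^P partition H into subsets of equal cardinality *)
  (forall p q : 'I_P, p != q -> [disjoint Hp p & Hp q]) ->
  \bigcup_(p < P) Hp p = [set: H] ->
  (forall p q : 'I_P, #|Hp p| = #|Hp q|) ->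
  (forall p : 'I_P, exists m : nat, (0 < m)%N /\ alpha * #|Hp p|%:R = m%:R) ->
  (* y^(p) in argmax_{y in Y} s_alpha([ell_h(y)]_{h in H^p}) *)
  (forall p : 'I_P, inY (yp p) /\
     forall y, inY y ->
       s_alpha alpha (Hp p) (ell N r iw M y) <=
       s_alpha alpha (Hp p) (ell N r iw M (yp p))) ->
  let zhat := fmax (fun y : 'M[bool]_(K, d) => inY y)
                   (fun y => s_alpha alpha [set: H] (ell N r iw M y)) in
  fmax (fun _ : 'I_P => true)
       (fun p => s_alpha alpha [set: H] (ell N r iw M (yp p))) <= zhat /\
  zhat <= P%:R^-1 * \sum_(p < P) s_alpha alpha (Hp p) (ell N r iw M (yp p)).
Proof.
move=> _ _ _ H_gt0 _ alpha_le1 Hp_disjoint Hp_cover Hp_card alpha_Hp yp_opt zhat.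
have [h0 _] := card_gt0P H_gt0.
have /bigcupP[p0 _ _] : h0 \in \bigcup_(p < P) Hp p by rewrite Hp_cover inE.
have [m [_ alpha_Hp0]] := alpha_Hp p0.
have alpha_Hp_m p : alpha * #|Hp p|%:R = m%:R by rewrite (Hp_card p p0).
split.
  apply: (fmax_le (x := p0)) => // p _.
  exact: fmax_ub _ (yp_opt p).1.
apply: (fmax_le (yp_opt p0).1) => y Yy.
rewrite -Hp_cover -[P in P%:R^-1]card_ord.
apply: (le_trans (s_alpha_bigcup_le Hp_disjoint _ alpha_le1 alpha_Hp_m)).
by rewrite ler_wpM2l ?invr_ge0 // ler_sum // => p _; apply: (yp_opt p).2.
Qed.
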